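(* Let $\mathcal D$ be a complete, cocomplete, extremally co-well-powered (extremal epi, mono) category. Then $\mathcal Q(\mathcal D)$ is an (extremal epi, mono) category.
   Context: For a category $\mathcal D$ and an object $d$, $M(d)$ denotes the class of all morphisms with source $d$, quasi-ordered by $\phi_1\ge\phi_2$ iff there is $h$ with $h\phi_1=\phi_2$. A projective filtration on $d$ is a non-empty, directed, saturated subclass $F\subseteq M(d)$ (saturated: $\phi_1\in F$, $\phi_1\ge\phi_2$ imply $\phi_2\in F$). A subclass $S\subseteq F$ is initial if every $\phi\in F$ satisfies $\phi\le\psi$ for some $\psi\in S$. For $f\colon d'\to d$, $f^*(F)=\{\phi f:\phi\in F\}$. $\mathcal P(\mathcal D)$ has objects $(d,F)$, and morphisms $(d_1,F_1)\to(d_2,F_2)$ the morphisms $f\colon d_1\to d_2$ of $\mathcal D$ with $f^*(F_2)\subseteq F_1$. $F$ is reduced if it has an initial subclass of extremal epimorphisms; $\mathcal Q(\mathcal D)$ is the full subcategory of $\mathcal P(\mathcal D)$ of reduced filtered objects. An (extremal epi, mono) category is one in which every morphism factors as an extremal epimorphism followed by a monomorphism and such factorisations have the unique diagonal fill-in property. *)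

From Stdlib Require Import ProofIrrelevance.

Set Implicit Arguments.

(** * Categories (morphism equality is Leibniz equality) *)
Record Category := {
  Ob :> Type;
  Hom : Ob -> Ob -> Type;
  comp : forall a b c : Ob, Hom b c -> Hom a b -> Hom a c;
  idm : forall a : Ob, Hom a a;
  comp_assoc : forall a b c d (f : Hom a b) (g : Hom b c) (h : Hom c d),
      comp h (comp g f) = comp (comp h g) f;
  comp_id_l : forall a b (f : Hom a b), comp (idm b) f = f;
  comp_id_r : forall a b (f : Hom a b), comp f (idm a) = f }.
Arguments Hom {C} _ _ : rename.
Arguments comp {C a b c} _ _ : rename.
Arguments idm {C} _ : rename.

(** Small categories: objects and hom-sets in [Set] ("small" = [Set]-sized). *)
Record SmallCategory := {
  sOb : Set;
  sHom : sOb -> sOb -> Set;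
  scomp : forall a b c : sOb, sHom b c -> sHom a b -> sHom a c;
  sidm : forall a : sOb, sHom a a;
  scomp_assoc : forall a b c d (f : sHom a b) (g : sHom b c) (h : sHom c d),
      scomp h (scomp g f) = scomp (scomp h g) f;
  scomp_id_l : forall a b (f : sHom a b), scomp (sidm b) f = f;
  scomp_id_r : forall a b (f : sHom a b), scomp f (sidm a) = f }.
Arguments sHom {J} _ _ : rename.
Arguments scomp {J a b c} _ _ : rename.
Arguments sidm {J} _ : rename.

Record Functor (J : SmallCategory) (D : Category) := {
  fobj : sOb J -> Ob D;
  fmap : forall j k : sOb J, sHom j k -> Hom (fobj j) (fobj k);
  fmap_id : forall j, fmap j j (sidm j) = idm (fobj j);
  fmap_comp : forall j k l (u : sHom j k) (v : sHom k l),
      fmap j l (scomp v u) = comp (fmap k l v) (fmap j k u) }.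
Arguments fobj {J D} _ _.
Arguments fmap {J D} _ {j k} _.

Section Basic.
Variable C : Category.

Definition is_limit (J : SmallCategory) (F : Functor J C)
  (L : Ob C) (pi : forall j, Hom L (fobj F j)) : Prop :=
  (forall j k (u : sHom j k), comp (fmap F u) (pi j) = pi k) /\
  (forall (X : Ob C) (s : forall j, Hom X (fobj F j)),
      (forall j k (u : sHom j k), comp (fmap F u) (s j) = s k) ->
      exists! h : Hom X L, forall j, comp (pi j) h = s j).

Definition is_colimit (J : SmallCategory) (F : Functor J C)
  (L : Ob C) (iota : forall j, Hom (fobj F j) L) : Prop :=
  (forall j k (u : sHom j k), comp (iota k) (fmap F u) = iota j) /\
  (forall (X : Ob C) (s : forall j, Hom (fobj F j) X),
      (forall j k (u : sHom j k), comp (s k) (fmap F u) = s j) ->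
      exists! h : Hom L X, forall j, comp h (iota j) = s j).

Definition complete : Prop :=
  forall (J : SmallCategory) (F : Functor J C),
    exists (L : Ob C) (pi : forall j, Hom L (fobj F j)), is_limit F L pi.

Definition cocomplete : Prop :=
  forall (J : SmallCategory) (F : Functor J C),
    exists (L : Ob C) (iota : forall j, Hom (fobj F j) L), is_colimit F L iota.

Definition is_mono {a b : Ob C} (m : Hom a b) : Prop :=
  forall x (g h : Hom x a), comp m g = comp m h -> g = h.

Definition is_epi {a b : Ob C} (e : Hom a b) : Prop :=
  forall x (g h : Hom b x), comp g e = comp h e -> g = h.

Definition is_iso {a b : Ob C} (f : Hom a b) : Prop :=
  exists g : Hom b a, comp g f = idm a /\ comp f g = idm b.

Definition is_extremal_epi {a b : Ob C} (e : Hom a b) : Prop :=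
  is_epi e /\
  forall c (g : Hom a c) (m : Hom c b), e = comp m g -> is_mono m -> is_iso m.

Definition extremally_co_well_powered : Prop :=
  forall d : Ob C,
    exists (I : Set) (c : I -> Ob C) (q : forall i, Hom d (c i)),
      (forall i, is_extremal_epi (q i)) /\
      forall (c' : Ob C) (e : Hom d c'), is_extremal_epi e ->
        exists i (k : Hom (c i) c'), is_iso k /\ comp k (q i) = e.

Definition extremal_epi_mono_category : Prop :=
  (forall a b (f : Hom a b), exists c (e : Hom a c) (m : Hom c b),
      is_extremal_epi e /\ is_mono m /\ f = comp m e) /\
  (forall a b c d (e : Hom a b) (m : Hom c d) (u : Hom a c) (v : Hom b d),
      is_extremal_epi e -> is_mono m -> comp v e = comp m u ->
      exists! w : Hom b c, comp w e = u /\ comp m w = v).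

(** A subclass of M(d) (morphisms with source d) is a predicate. *)
Definition morclass (d : Ob C) := forall c : Ob C, Hom d c -> Prop.

Definition mge {d c1 c2 : Ob C} (phi1 : Hom d c1) (phi2 : Hom d c2) : Prop :=
  exists h : Hom c1 c2, comp h phi1 = phi2.

Definition is_projective_filtration {d : Ob C} (F : morclass d) : Prop :=
  (exists c (phi : Hom d c), F c phi) /\
  (forall c1 (phi1 : Hom d c1) c2 (phi2 : Hom d c2),
      F c1 phi1 -> F c2 phi2 ->
      exists c (psi : Hom d c), F c psi /\ mge psi phi1 /\ mge psi phi2) /\
  (forall c1 (phi1 : Hom d c1) c2 (phi2 : Hom d c2),
      F c1 phi1 -> mge phi1 phi2 -> F c2 phi2).

Definition is_initial {d : Ob C} (F S : morclass d) : Prop :=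
  (forall c phi, S c phi -> F c phi) /\
  (forall c (phi : Hom d c), F c phi ->
      exists c' (psi : Hom d c'), S c' psi /\ mge psi phi).

Definition is_reduced {d : Ob C} (F : morclass d) : Prop :=
  exists S : morclass d, is_initial F S /\
    (forall c (psi : Hom d c), S c psi -> is_extremal_epi psi).

End Basic.

Section QCat.
Variable D : Category.

Record QOb := {
  qobj : Ob D;
  qfilt : @morclass D qobj;
  qfilt_proj : is_projective_filtration qfilt;
  qfilt_red : is_reduced qfilt }.

Record QHom (X Y : QOb) := {
  qmor : Hom (qobj X) (qobj Y);
  qmor_pull : forall c (phi : Hom (qobj Y) c), qfilt Y c phi -> qfilt X c (comp phi qmor) }.

Lemma QHom_eq (X Y : QOb) (f g : QHom X Y) : qmor f = qmor g -> f = g.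
Proof.
  destruct f as [f pf], g as [g pg]; simpl; intros ->.
  f_equal; apply proof_irrelevance.
Qed.

Definition Qcomp (X Y Z : QOb) (g : QHom Y Z) (f : QHom X Y) : QHom X Z.
Proof.
  refine {| qmor := comp (qmor g) (qmor f) |}.
  intros c phi Hphi.
  rewrite comp_assoc.
  apply (qmor_pull f), (qmor_pull g), Hphi.
Defined.

Definition Qid (X : QOb) : QHom X X.
Proof.
  refine {| qmor := idm (qobj X) |}.
  intros c phi Hphi. rewrite comp_id_r. exact Hphi.
Defined.

Definition Qcat : Category.
Proof.
  refine {| Ob := QOb; Hom := QHom; comp := Qcomp; idm := Qid |}.
  - intros; apply QHom_eq; simpl; apply comp_assoc.
  - intros; apply QHom_eq; simpl; apply comp_id_l.
  - intros; apply QHom_eq; simpl; apply comp_id_r.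
Defined.

End QCat.


(** The only tool needed from D, besides its factorisation system, is the
    existence of pushouts (a consequence of cocompleteness).  The key
    construction is the push-forward of a filtration: for a reduced filtered
    object X = (d, F) and any g : d -> c, the class
        g_*(F) = { phi : c -> t | phi g ∈ F }
    is again a reduced projective filtration.  Directedness and reducedness
    are obtained by pushing witnesses of F out along g, using that pushouts
    of extremal epimorphisms are extremal epimorphisms when D has the
    (extremal epi, mono) diagonal fill-in.  With this:
    - a factorisation f = m e in D lifts to X --e--> (c, e_*F) --m--> Y in Q;
    - an extremal epimorphism e : X -> Y of Q is an extremal epimorphism of
      D with F_Y = e_*(F_X), so the diagonals of D are morphisms of Q.
    Monomorphisms of Q are exactly the maps that are monic in D, tested
    against the objects (x, M(x)) carrying the maximal filtration. *)

Inductive span_ob : Set := span_left | span_apex | span_right.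

Definition span_hom (a b : span_ob) : Set :=
  match a, b with
  | span_left, span_left | span_apex, span_apex | span_right, span_right
  | span_apex, span_left | span_apex, span_right => unit
  | _, _ => Empty_set
  end.

Lemma span_hom_unique a b (u v : span_hom a b) : u = v.
Proof. destruct a, b; destruct u; destruct v; reflexivity. Qed.

Definition span_comp (a b c : span_ob) (v : span_hom b c) (u : span_hom a b) :
  span_hom a c.
Proof.
  destruct a, b, c; simpl in *;
  first [exact tt | exact (match u with end) | exact (match v with end)].
Defined.

Definition span_id (a : span_ob) : span_hom a a.
Proof. destruct a; exact tt. Defined.

Definition Span : SmallCategory.
Proof.
  refine {| sOb := span_ob; sHom := span_hom; scomp := span_comp; sidm := span_id |};
  intros; apply span_hom_unique.
Defined.

Section Pushouts.
Variable C : Category.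

Lemma colimit_hom_ext (J : SmallCategory) (F : Functor J C) (L : C)
  (iota : forall j, Hom (fobj F j) L) (t : C) (k k' : Hom L t) :
  is_colimit F L iota -> (forall j, comp k (iota j) = comp k' (iota j)) -> k = k'.
Proof.
  intros [Hcocone Huniv] Hagree.
  assert (Hs : forall j l (u : sHom j l),
             comp (comp k (iota l)) (fmap F u) = comp k (iota j)).
  { intros j l u. rewrite <- comp_assoc, Hcocone. reflexivity. }
  destruct (Huniv t _ Hs) as [h [_ Hh]].
  transitivity h; [symmetry|]; apply Hh; intros j; [reflexivity | symmetry; apply Hagree].
Qed.

Definition is_pushout {d x c P : C} (psi : Hom d x) (e : Hom d c)
  (a : Hom x P) (b : Hom c P) : Prop :=
  comp a psi = comp b e /\
  (forall t (s1 : Hom x t) (s2 : Hom c t), comp s1 psi = comp s2 e ->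
     exists k : Hom P t, comp k a = s1 /\ comp k b = s2) /\
  (forall t (k k' : Hom P t), comp k a = comp k' a -> comp k b = comp k' b -> k = k').

Section Span.
Variables (d x c : C) (psi : Hom d x) (e : Hom d c).

Definition span_obj (j : span_ob) : C :=
  match j with span_left => x | span_apex => d | span_right => c end.

Definition span_map (j k : span_ob) : span_hom j k -> Hom (span_obj j) (span_obj k).
Proof.
  destruct j, k; simpl; intro u;
  first [exact (idm _) | exact psi | exact e | destruct u].
Defined.

Definition span_diagram : Functor Span C.
Proof.
  refine (@Build_Functor Span C span_obj span_map _ _).
  - intros j; destruct j; reflexivity.
  - intros j k l u v; destruct j, k, l; destruct u; destruct v; cbn;
    rewrite ?comp_id_l, ?comp_id_r; reflexivity.
Defined.

End Span.

Lemma pushout_exists : cocomplete C ->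
  forall {d x c : C} (psi : Hom d x) (e : Hom d c),
  exists (P : C) (a : Hom x P) (b : Hom c P), is_pushout psi e a b.
Proof.
  intros Hcocomplete d x c psi e.
  destruct (Hcocomplete Span (span_diagram _ _ _ psi e)) as [P [iota Hcolim]].
  pose proof Hcolim as [Hcocone Huniv].
  assert (HL : comp (iota span_left) psi = iota span_apex)
    by exact (Hcocone span_apex span_left tt).
  assert (HR : comp (iota span_right) e = iota span_apex)
    by exact (Hcocone span_apex span_right tt).
  exists P, (iota span_left), (iota span_right). split; [|split].
  - etransitivity; [exact HL | symmetry; exact HR].
  - intros t s1 s2 Hs.
    set (s := fun j => match j return Hom (span_obj d x c j) t with
                       | span_left => s1 | span_apex => comp s1 psi
                       | span_right => s2 end).
    destruct (Huniv t s) as [h [Hh _]].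
    + intros j k u; destruct j, k; destruct u; cbn; rewrite ?comp_id_r; auto.
    + exists h; split; [exact (Hh span_left) | exact (Hh span_right)].
  - intros t k k' Ha Hb. eapply colimit_hom_ext; [exact Hcolim|].
    intros j; destruct j; auto.
    change (comp k (iota span_apex) = comp k' (iota span_apex)).
    rewrite <- HL, !comp_assoc. exact (f_equal (fun h => comp h psi) Ha).
Qed.

Lemma filtration_postcomp {d : C} {F : morclass C d} :
  is_projective_filtration F ->
  forall t (phi : Hom d t) t' (h : Hom t t'), F t phi -> F t' (comp h phi).
Proof.
  intros [_ [_ Hsat]] t phi t' h Hphi.
  apply (Hsat _ phi); [exact Hphi | exists h; reflexivity].
Qed.

Lemma id_extremal_epi (a : C) : is_extremal_epi C (idm a).
Proof.
  split.
  - intros x g h H; rewrite !comp_id_r in H; exact H.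
  - intros c g m Hm Hmono. exists g. split.
    + apply Hmono. rewrite comp_assoc, <- Hm, comp_id_l, comp_id_r; reflexivity.
    + symmetry; exact Hm.
Qed.

Definition diagonal_fill_in : Prop :=
  forall a b c d (e : Hom a b) (m : Hom c d) (u : Hom a c) (v : Hom b d),
    is_extremal_epi C e -> is_mono C m -> comp v e = comp m u ->
    exists! w : Hom b c, comp w e = u /\ comp m w = v.

Lemma pushout_extremal_epi : diagonal_fill_in ->
  forall {d x c P : C} {psi : Hom d x} {e : Hom d c} {a : Hom x P} {b : Hom c P},
  is_pushout psi e a b -> is_extremal_epi C psi -> is_extremal_epi C b.
Proof.
  intros Hdiag d x c P psi e a b [Hsq [Hex Huniq]] Hpsi.
  pose proof Hpsi as [Hepi _].
  split.
  - intros z g g' Hg. apply Huniq; [|exact Hg]. apply Hepi.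
    rewrite <- !comp_assoc, Hsq, !comp_assoc, Hg; reflexivity.
  - intros W g m Hb Hm.
    assert (Hsq' : comp a psi = comp m (comp g e)) by (rewrite Hsq, Hb, comp_assoc; reflexivity).
    destruct (Hdiag _ _ _ _ _ _ _ _ Hpsi Hm Hsq') as [w [[Hw1 Hw2] _]].
    destruct (Hex _ w g Hw1) as [k [Hka Hkb]].
    assert (Hmk : comp m k = idm P).
    { apply Huniq; rewrite <- comp_assoc, ?Hka, ?Hkb, comp_id_l; auto. }
    exists k. split.
    + apply Hm. rewrite comp_assoc, Hmk, comp_id_l, comp_id_r; reflexivity.
    + exact Hmk.
Qed.

End Pushouts.

Section ReducedFilteredObjects.
Variable D : Category.

Definition max_filt (x : D) : morclass D x := fun _ _ => True.

Lemma max_filt_projective (x : D) : is_projective_filtration (max_filt x).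
Proof.
  split; [|split].
  - exists x, (idm x); exact I.
  - intros c1 p1 c2 p2 _ _. exists x, (idm x). split; [exact I|split].
    + exists p1; apply comp_id_r.
    + exists p2; apply comp_id_r.
  - intros; exact I.
Qed.

(** M(x) is reduced: the identity alone is initial. *)
Lemma max_filt_reduced (x : D) : is_reduced (max_filt x).
Proof.
  exists (fun c phi => is_extremal_epi D phi). split; [split|].
  - intros; exact I.
  - intros c phi _. exists x, (idm x). split; [apply id_extremal_epi|].
    exists phi; apply comp_id_r.
  - auto.
Qed.

Definition MaxQ (x : D) : QOb D := Build_QOb (max_filt_projective x) (max_filt_reduced x).

Definition from_MaxQ {x : D} {X : QOb D} (g : Hom x (qobj X)) : QHom (MaxQ x) X :=
  Build_QHom (MaxQ x) X g (fun _ _ _ => I).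

Lemma Qmono_Dmono {X Y : QOb D} {m : QHom X Y} :
  @is_mono (Qcat D) X Y m -> is_mono D (qmor m).
Proof.
  intros Hm x g h Hgh.
  assert (E : from_MaxQ g = from_MaxQ h)
    by (apply (Hm (MaxQ x)); apply QHom_eq; exact Hgh).
  exact (f_equal (@qmor D _ _) E).
Qed.

Lemma Dmono_Qmono {X Y : QOb D} {m : QHom X Y} :
  is_mono D (qmor m) -> @is_mono (Qcat D) X Y m.
Proof.
  intros Hm W g h Hgh. apply QHom_eq, Hm.
  exact (f_equal (@qmor D _ _) Hgh).
Qed.

Lemma Depi_Qepi {X Y : QOb D} {f : QHom X Y} :
  is_epi D (qmor f) -> @is_epi (Qcat D) X Y f.
Proof.
  intros Hf W g h Hgh. apply QHom_eq, Hf.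
  exact (f_equal (@qmor D _ _) Hgh).
Qed.

Lemma Qiso_Diso {X Y : QOb D} {f : QHom X Y} :
  @is_iso (Qcat D) X Y f -> is_iso D (qmor f).
Proof.
  intros [g [Hgf Hfg]]. exists (qmor g).
  split; [exact (f_equal (@qmor D _ _) Hgf) | exact (f_equal (@qmor D _ _) Hfg)].
Qed.

Hypothesis Hcocomplete : cocomplete D.
Hypothesis Hdiag : diagonal_fill_in D.

Section PushForward.
Variables (X : QOb D) (c : D) (g : Hom (qobj X) c).

Definition push_filt : morclass D c := fun t phi => qfilt X t (comp phi g).

Lemma push_out_member {t : D} {psi : Hom (qobj X) t} :
  qfilt X t psi ->
  exists (P : D) (a : Hom t P) (b : Hom c P), is_pushout D psi g a b /\ push_filt P b.
Proof.
  intros Hpsi. destruct (pushout_exists D Hcocomplete psi g) as [P [a [b Hpo]]].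
  exists P, a, b. split; [exact Hpo|].
  unfold push_filt. rewrite <- (proj1 Hpo).
  apply (filtration_postcomp D (qfilt_proj X)); exact Hpsi.
Qed.

Lemma pushout_above {t : D} {psi : Hom (qobj X) t} {P : D} {a : Hom t P}
  {b : Hom c P} {t' : D} {phi : Hom c t'} :
  is_pushout D psi g a b -> mge D psi (comp phi g) -> mge D b phi.
Proof.
  intros [_ [Hex _]] [h Hh]. destruct (Hex _ h phi Hh) as [k [_ Hk]].
  exists k; exact Hk.
Qed.

Lemma push_filt_projective : is_projective_filtration push_filt.
Proof.
  destruct (qfilt_proj X) as [[t0 [phi0 H0]] [Hdir _]].
  split; [|split].
  - destruct (push_out_member H0) as [P [_ [b [_ Hb]]]]. exists P, b; exact Hb.
  - intros t1 p1 t2 p2 H1 H2.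
    destruct (Hdir _ _ _ _ H1 H2) as [t [psi [Hpsi [Hge1 Hge2]]]].
    destruct (push_out_member Hpsi) as [P [a [b [Hpo Hb]]]].
    exists P, b. split; [exact Hb|].
    split; eapply pushout_above; eauto.
  - intros t1 p1 t2 p2 H1 [h Hh]. unfold push_filt in *. subst p2.
    rewrite <- comp_assoc. apply (filtration_postcomp D (qfilt_proj X)); exact H1.
Qed.

(** Reducedness: push out the extremal epimorphic witnesses of F_X. *)
Lemma push_filt_reduced : is_reduced push_filt.
Proof.
  exists (fun t phi => push_filt t phi /\ is_extremal_epi D phi).
  split; [split|].
  - intros t phi [H _]; exact H.
  - intros t phi Hphi.
    destruct (qfilt_red X) as [S [[HSF HSinit] HSext]].
    destruct (HSinit _ _ Hphi) as [t' [psi [HSpsi Hge]]].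
    destruct (push_out_member (HSF _ _ HSpsi)) as [P [a [b [Hpo Hb]]]].
    exists P, b. split; [split|].
    + exact Hb.
    + exact (pushout_extremal_epi D Hdiag Hpo (HSext _ _ HSpsi)).
    + exact (pushout_above Hpo Hge).
  - intros t psi [_ H]; exact H.
Qed.

Definition pushQ : QOb D := Build_QOb push_filt_projective push_filt_reduced.

Definition push_unit : QHom X pushQ := Build_QHom X pushQ g (fun _ _ H => H).

Definition push_lift (Y : QOb D) (f : QHom X Y) (m : Hom c (qobj Y))
  (Hf : qmor f = comp m g) : QHom pushQ Y.
Proof.
  refine (Build_QHom pushQ Y m _).
  intros t phi Hphi. simpl. unfold push_filt.
  rewrite <- comp_assoc, <- Hf. exact (qmor_pull f t phi Hphi).
Defined.

Lemma push_unit_extremal : is_extremal_epi D g -> @is_extremal_epi (Qcat D) X pushQ push_unit.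
Proof.
  intros [Hepi Hext]. split.
  - apply Depi_Qepi; exact Hepi.
  - intros W h m Hfact Hm.
    assert (Hg : g = comp (qmor m) (qmor h)) by exact (f_equal (@qmor D _ _) Hfact).
    destruct (Hext _ _ _ Hg (Qmono_Dmono Hm)) as [k [Hkm Hmk]].
    assert (Hkg : comp k g = qmor h).
    { rewrite Hg, comp_assoc.
      transitivity (comp (idm _) (qmor h)); [exact (f_equal (fun z => comp z (qmor h)) Hkm)|].
      apply comp_id_l. }
    assert (Hk_pull : forall t (phi : Hom (qobj W) t), qfilt W t phi -> push_filt t (comp phi k)).
    { intros t phi Hphi. unfold push_filt.
      rewrite <- comp_assoc, Hkg. exact (qmor_pull h t phi Hphi). }
    exists (Build_QHom pushQ W k Hk_pull).
    split; apply QHom_eq; simpl; assumption.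
Qed.

End PushForward.
Arguments push_filt X {c} g _ _.
Arguments pushQ X {c} g.
Arguments push_unit X {c} g.
Arguments push_lift {X c g Y} f m Hf.
Arguments push_unit_extremal {X c g} _.

Section ExtremalEpi.
Variables (X Y : QOb D) (e : QHom X Y).
Hypothesis He : @is_extremal_epi (Qcat D) X Y e.

(** An extremal epimorphism of Q(D) carries the push-forward filtration:
    F_Y = e_*(F_X).  (The identity (Y, e_*F_X) -> Y is monic, hence iso.) *)
Lemma extremal_epi_filt t (phi : Hom (qobj Y) t) :
  qfilt X t (comp phi (qmor e)) -> qfilt Y t phi.
Proof.
  intros Hphi.
  set (m := push_lift e (idm (qobj Y)) (eq_sym (comp_id_l _ _ _ (qmor e)))).
  assert (Hfact : e = @comp (Qcat D) _ _ _ m (push_unit X (qmor e)))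
    by (apply QHom_eq; symmetry; apply comp_id_l).
  assert (Hm : @is_mono (Qcat D) _ _ m).
  { apply Dmono_Qmono. intros z u v Huv. rewrite !comp_id_l in Huv. exact Huv. }
  destruct (proj2 He _ _ _ Hfact Hm) as [K [HKm _]].
  assert (HK : qmor K = idm (qobj Y)).
  { rewrite <- (comp_id_r _ _ _ (qmor K)). exact (f_equal (@qmor D _ _) HKm). }
  pose proof (qmor_pull K t phi Hphi) as H. rewrite HK, comp_id_r in H. exact H.
Qed.

Lemma extremal_epi_underlying : is_extremal_epi D (qmor e).
Proof.
  split.
  - intros z g h Hgh.
    assert (Hh_pull : forall t (phi : Hom z t),
               push_filt Y g t phi -> qfilt Y t (comp phi h)).
    { intros t phi Hphi. apply extremal_epi_filt.
      rewrite <- comp_assoc, <- Hgh, comp_assoc.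
      apply (qmor_pull e); exact Hphi. }
    assert (E : push_unit Y g = Build_QHom Y (pushQ Y g) h Hh_pull).
    { apply (proj1 He). apply QHom_eq; exact Hgh. }
    exact (f_equal (@qmor D _ _) E).
  - intros W g m Hfact Hm.
    set (M := push_lift e m Hfact).
    assert (HQfact : e = @comp (Qcat D) _ _ _ M (push_unit X g))
      by (apply QHom_eq; exact Hfact).
    apply (Qiso_Diso (f := M)).
    apply (proj2 He _ _ _ HQfact), Dmono_Qmono; exact Hm.
Qed.

End ExtremalEpi.
Arguments extremal_epi_filt {X Y e} He {t phi} _.
Arguments extremal_epi_underlying {X Y e} He.

Lemma Q_diagonal_fill_in : diagonal_fill_in (Qcat D).
Proof.
  intros X Y W V e m u v He Hm Hsq.
  assert (HsqD : comp (qmor v) (qmor e) = comp (qmor m) (qmor u))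
    by exact (f_equal (@qmor D _ _) Hsq).
  destruct (Hdiag _ _ _ _ _ _ _ _ (extremal_epi_underlying He) (Qmono_Dmono Hm) HsqD)
    as [w [[Hwe Hmw] _]].
  assert (Hw_pull : forall t (phi : Hom (qobj W) t),
             qfilt W t phi -> qfilt Y t (comp phi w)).
  { intros t phi Hphi. apply (extremal_epi_filt He).
    rewrite <- comp_assoc, Hwe. exact (qmor_pull u t phi Hphi). }
  exists (Build_QHom Y W w Hw_pull).
  split; [split; apply QHom_eq; assumption|].
  intros w' [Hw'e _]. apply (proj1 He).
  rewrite Hw'e. apply QHom_eq; exact Hwe.
Qed.

End ReducedFilteredObjects.
Arguments pushQ {D} Hcocomplete Hdiag X {c} g.
Arguments push_unit {D} Hcocomplete Hdiag X {c} g.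
Arguments push_lift {D} Hcocomplete Hdiag {X c g Y} f m Hf.
Arguments push_unit_extremal {D} Hcocomplete Hdiag {X c g} _.

Theorem mainTheorem9 (D : Category) :
  complete D -> cocomplete D -> extremally_co_well_powered D ->
  extremal_epi_mono_category D ->
  extremal_epi_mono_category (Qcat D).
Proof.
  intros _ Hcocomplete _ [Hfactor Hdiag].
  split.
  - intros X Y f.
    destruct (Hfactor _ _ (qmor f)) as [c [e [m [He [Hm Hf]]]]].
    exists (pushQ Hcocomplete Hdiag X e), (push_unit Hcocomplete Hdiag X e),
           (push_lift Hcocomplete Hdiag f m Hf).
    split; [|split].
    + apply push_unit_extremal; exact He.
    + apply Dmono_Qmono; exact Hm.
    + apply QHom_eq; exact Hf.
  - exact (Q_diagonal_fill_in D Hcocomplete Hdiag).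
Qed.
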